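(* Assume (A1)–(A3), (I) and (N) below. Then $\Omega=\Omega(\beta^*_{EGMM})$ is diagonal, and the EGMM weights $\lambda^{EGMM}_\ell=\lambda_\ell(\Omega^{-1})$ equal $$\lambda^{EGMM}_\ell=\frac{\pi_\ell^2p_\ell(1-p_\ell)/\sigma^2_{\epsilon,\ell}}{\sum_{k=1}^L\pi_k^2p_k(1-p_k)/\sigma^2_{\epsilon,k}},\qquad \sigma^2_{\epsilon,\ell}=\frac{[\Omega]_{\ell\ell}}{p_\ell(1-p_\ell)}.$$
   Context: Observe i.i.d. $(Y_i,D_i,\mathbf Z_i)$, $Y_i\in\mathbb R$, $D_i\in\{0,1\}$, $\mathbf Z_i=(Z_{1i},\dots,Z_{Li})'\in\{0,1\}^L$, $L\ge2$; potential outcomes $Y_i(0),Y_i(1)$, compliance type $D_i(\cdot):\{0,1\}^L\to\{0,1\}$, $D_i=D_i(\mathbf Z_i)$, $Y_i=D_iY_i(1)+(1-D_i)Y_i(0)$. $p_\ell=P(Z_{\ell i}=1)$, $\pi_\ell,\rho_\ell$ the differences of $\mathbb E[D_i\mid Z_{\ell i}=z]$, $\mathbb E[Y_i\mid Z_{\ell i}=z]$ between $z=1,0$, $\mathrm{Wald}_\ell=\rho_\ell/\pi_\ell$, $\gamma_\ell=\mathrm{Cov}(D_i,Z_{\ell i})$, $\boldsymbol\gamma=(\gamma_\ell)_\ell$, $\Sigma_Z=\mathrm{Var}(\mathbf Z_i)$, $\lambda_\ell(W)=\gamma_\ell[W\boldsymbol\gamma]_\ell/(\boldsymbol\gamma'W\boldsymbol\gamma)$.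 $g_i(\beta)$ has entries $(Y_i-\beta D_i)(Z_{\ell i}-p_\ell)$, $\Omega(\beta)=\mathbb E[g_i(\beta)g_i(\beta)']$ (positive definite). $\beta^*_{EGMM}$ is a fixed point of $\beta\mapsto\sum_\ell\lambda_\ell(\Omega(\beta)^{-1})\mathrm{Wald}_\ell$. The complier group of instrument $\ell$ is $\mathcal C_\ell=\{i:D_i(1,z_{-\ell})>D_i(0,z_{-\ell})\text{ for some }z_{-\ell}\}$, where $(z_\ell,z_{-\ell})$ denotes the instrument vector with $\ell$-th coordinate $z_\ell$. Assumptions: (A1) $(Y_i(0),Y_i(1),D_i(\cdot))$ independent of $\mathbf Z_i$. (A2) $D_i(z)$ nondecreasing in each coordinate for every $i$. (A3) $p_\ell>0$, $\pi_\ell>0$ for all $\ell$; $\Sigma_Z$ positive definite. (I) $Z_{1i},\dots,Z_{Li}$ mutually independent and jointly independent of $(Y_i(0),Y_i(1),D_i(\cdot))$. (N) $\mathcal C_\ell\cap\mathcal C_k=\emptyset$ for all $\ell\ne k$. *)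

From HB Require Import structures.
From mathcomp Require Import all_boot all_order all_algebra.
From mathcomp Require Import all_classical all_reals all_analysis.
Set Implicit Arguments. Unset Strict Implicit. Unset Printing Implicit Defensive.
Import Order.TTheory GRing.Theory Num.Theory.
Local Open Scope classical_set_scope.
Local Open Scope ring_scope.

(* Instrument vectors z in {0,1}^L, and compliance types D(.) : {0,1}^L -> {0,1}. *)
Notation ivec L := {ffun 'I_L -> bool}.
Notation ctype L := {ffun ivec L -> bool}.

Definition setcoord L (z : ivec L) (l : 'I_L) (b : bool) : ivec L :=
  [ffun j => if j == l then b else z j].

Definition posdef (R : numDomainType) n (M : 'M[R]_n) : Prop :=
  forall v : 'cV[R]_n, v != 0 -> 0 < (v^T *m M *m v) ord0 ord0.

Section Model.
Context {R : realType} {dT : measure_display} {T : measurableType dT}.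
Variable P : probability T R.
Variable L : nat.
Variables (Y0 Y1 : T -> R) (Dt : T -> ctype L) (Z : T -> ivec L).

(* Real-valued expectation (finite under the moment assumptions below). *)
Definition Ex (X : T -> R) : R := fine ('E_P[X])%E.
Definition Pr (A : set T) : R := fine (P A).

Definition Dobs (w : T) : bool := Dt w (Z w).
Definition Dv (w : T) : R := (Dobs w)%:R.
Definition Yv (w : T) : R := if Dobs w then Y1 w else Y0 w.
Definition Zv (l : 'I_L) (w : T) : R := (Z w l)%:R.

Definition p (l : 'I_L) : R := Pr [set w | Z w l = true].

Definition condE (X : T -> R) (l : 'I_L) (b : bool) : R :=
  Ex (fun w => X w * (Z w l == b)%:R) / Pr [set w | Z w l = b].

Definition pi_ (l : 'I_L) : R := condE Dv l true - condE Dv l false.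
Definition rho (l : 'I_L) : R := condE Yv l true - condE Yv l false.
Definition Wald (l : 'I_L) : R := rho l / pi_ l.

Definition gamma (l : 'I_L) : R :=
  Ex (fun w => Dv w * Zv l w) - Ex Dv * Ex (Zv l).
Definition gammav : 'cV[R]_L := \col_l gamma l.

Definition SigmaZ : 'M[R]_L :=
  \matrix_(l, k) (Ex (fun w => (Zv l w - p l) * (Zv k w - p k))).

Definition Omega (beta : R) : 'M[R]_L :=
  \matrix_(l, k) Ex (fun w => ((Yv w - beta * Dv w) * (Zv l w - p l)) *
                              ((Yv w - beta * Dv w) * (Zv k w - p k))).

Definition lambda (W : 'M[R]_L) (l : 'I_L) : R :=
  gamma l * (W *m gammav) l ord0 / (gammav^T *m W *m gammav) ord0 ord0.

Definition is_EGMM (beta : R) : Prop :=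
  beta = \sum_(l < L) lambda (invmx (Omega beta)) l * Wald l.

Definition complier (l : 'I_L) (w : T) : Prop :=
  exists z : ivec L, ~~ Dt w (setcoord z l false) && Dt w (setcoord z l true).

Definition A1 : Prop :=
  forall (A : set (R * R)) (d : ctype L) (z : ivec L), measurable A ->
    P ([set w | (Y0 w, Y1 w) \in A /\ Dt w = d] `&` [set w | Z w = z])
    = (P [set w | (Y0 w, Y1 w) \in A /\ Dt w = d] * P [set w | Z w = z])%E.

Definition A2 : Prop :=
  forall w (z : ivec L) (l : 'I_L), Dt w (setcoord z l false) ==> Dt w (setcoord z l true).

Definition A3 : Prop :=
  (forall l, 0 < p l) /\ (forall l, 0 < pi_ l) /\ posdef SigmaZ.

(* (I) Z_1,...,Z_L mutually independent and jointly independent of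
   (Y(0),Y(1),D(.)). *)
Definition Indep : Prop :=
  forall (A : set (R * R)) (d : ctype L) (z : ivec L), measurable A ->
    P ([set w | (Y0 w, Y1 w) \in A /\ Dt w = d] `&` [set w | Z w = z])
    = (P [set w | (Y0 w, Y1 w) \in A /\ Dt w = d] *
       \prod_(l < L) P [set w | Z w l = z l])%E.

Definition NoOverlap : Prop :=
  forall l k : 'I_L, l != k -> forall w, ~ (complier l w /\ complier k w).

(* Regularity: measurability and finite second moments (so that Omega,
   the conditional means, etc. are well defined). *)
Definition regular : Prop :=
  measurable_fun setT Y0 /\ measurable_fun setT Y1 /\
  (forall d, measurable [set w | Dt w = d]) /\
  (forall z, measurable [set w | Z w = z]) /\
  P.-integrable setT (fun w => (Y0 w ^+ 2)%:E) /\
  P.-integrable setT (fun w => (Y1 w ^+ 2)%:E).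

End Model.

From HB Require Import structures.
From mathcomp Require Import all_boot all_order all_algebra.
From mathcomp Require Import all_classical all_reals all_analysis.
From mathcomp Require Import measurable_realfun ring lra.
Import Order.TTheory GRing.Theory Num.Theory.
Local Open Scope ring_scope.
Local Open Scope classical_set_scope.

(* Split the sample space into the finitely many cells {D(.) = d, Z = z}. On a
   cell, (Y - beta D)^2 is a function of (Y(0), Y(1)) alone, and by (I) its
   integral over the cell is prod_j P(Z_j = z_j) times its integral over
   {D(.) = d}. Hence Omega(beta)_lk is the sum over compliance types d of
     sum_z (z_l - p_l) (z_k - p_k) prod_j P(Z_j = z_j) G_d(d(z)),
   where G_d(b) = E[(Y(b) - beta b)^2; D(.) = d]. For l <> k, by (N) a unit of
   type d is a complier for at most one of l and k, say not for k; by (A2) d(z)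
   then does not depend on z_k, and summing over z_k kills z_k - p_k. So
   Omega(beta) is diagonal for every beta, and the weights follow by inverting a diagonal
   matrix and using gamma_l = pi_l p_l (1 - p_l). *)

Lemma integral_mrestr {d} {T : measurableType d} {R : realType}
    (mu : {measure set T -> \bar R}) {E : set T} (mE : measurable E)
    (f : T -> \bar R) :
  measurable_fun setT f -> (forall x, (0 <= f x)%E) ->
  (\int[mrestr mu mE]_x f x = \int[mu]_(x in E) f x)%E.
Proof.
move=> mf f0.
rewrite (ge0_negligible_integral (measurableC mE) measurableT) //; last first.
  by rewrite /= /mrestr setICl measure0.
rewrite setTD setCK; apply: eq_measure_integral => A mA AE.
by rewrite /= /mrestr setIidl.
Qed.

Section finite_valued.
Context {d} {T : measurableType d} {R : realType} (P : probability T R).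
Context {X : finType} {xi : T -> X}.
Hypothesis mxi : forall x, measurable (xi @^-1` [set x]).

Lemma measurable_preimage_finite (A : set X) : measurable (xi @^-1` A).
Proof.
have -> : xi @^-1` A = \big[setU/set0]_(x <- enum X | `[< A x >]) xi @^-1` [set x].
  apply/seteqP; split=> [w Aw|w].
    by rewrite -bigcup_seq_cond; exists (xi w) => //=; rewrite mem_enum; exact/asboolP.
  by rewrite -bigcup_seq_cond => -[x /andP[_ /asboolP Ax] /= ->].
by apply: bigsetU_measurable => x _; exact: mxi.
Qed.

Lemma measurable_fun_comp_finite (phi : X -> R) : measurable_fun setT (phi \o xi).
Proof.
by move=> _ B _; rewrite setTI; exact: (measurable_preimage_finite (phi @^-1` B)).
Qed.

Lemma Ex_fibers (f : T -> R) : measurable_fun setT f ->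
  Ex P f = fine (\sum_x \int[P]_(w in xi @^-1` [set x]) (f w)%:E)%E.
Proof.
move=> mf; rewrite /Ex unlock.
have cover : [set: T] = \big[setU/set0]_(x <- enum X) xi @^-1` [set x].
  apply/seteqP; split=> // w _; rewrite -bigcup_seq.
  by exists (xi w) => //=; rewrite mem_enum.
have mfE : measurable_fun (\big[setU/set0]_(x <- enum X) xi @^-1` [set x]) (EFin \o f).
  by rewrite -cover; exact/measurable_EFinP.
rewrite cover integral_bigsetU_EFin ?enum_uniq // ?big_enum //.
by move=> x y _ _ [w [/= <- <-]].
Qed.

Lemma Ex_comp_finite (phi : X -> R) :
  Ex P (phi \o xi) = \sum_x phi x * Pr P (xi @^-1` [set x]).
Proof.
rewrite Ex_fibers; last exact: measurable_fun_comp_finite.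
rewrite (eq_bigr (fun x => (phi x * Pr P (xi @^-1` [set x]))%:E)) ?sumEFin //.
move=> x _; rewrite (eq_integral (fun=> (phi x)%:E)); last by move=> w /[!inE] /= ->.
by rewrite integral_cst ?mxi // /Pr EFinM fineK ?fin_num_measure.
Qed.

End finite_valued.

Section flips.
Context {L : nat}.

Definition flip (z : ivec L) (k : 'I_L) : ivec L := setcoord z k (~~ z k).

Lemma flipK k : involutive (flip^~ k).
Proof.
move=> z; apply/ffunP => j; rewrite !ffunE eqxx.
by case: eqP => [->|//]; rewrite negbK.
Qed.

Lemma flip_id z k : flip z k k = ~~ z k.
Proof. by rewrite ffunE eqxx. Qed.

Lemma flip_neq z k j : j != k -> flip z k j = z j.
Proof. by move=> /negbTE jk; rewrite ffunE jk. Qed.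

Lemma sum_centered_flip_invariant (R : numDomainType) k (q : 'I_L -> bool -> R)
    (H : ivec L -> R) :
  q k false = 1 - q k true -> (forall z, H (flip z k) = H z) ->
  \sum_(z : ivec L) ((z k)%:R - q k true) * \prod_j q j (z j) * H z = 0.
Proof.
move=> qk Hk.
pose F (z : ivec L) := ((z k)%:R - q k true) * \prod_j q j (z j) * H z.
change (\sum_(z : ivec L) F z = 0).
have F_flip z : F z + F (flip z k) = 0.
  rewrite /F Hk (bigD1 k) //= [X in _ + _ * X * _](bigD1 k) //= flip_id.
  under [X in _ + _ * (_ * X) * _]eq_bigr => j jk do rewrite flip_neq //.
  by case: (z k); rewrite /= qk; ring.
have F_reindex : \sum_(z : ivec L) F (flip z k) = \sum_z F z.
  by rewrite [RHS](reindex_inj (can_inj (flipK k))).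
have : \sum_(z : ivec L) F z + \sum_z F (flip z k) = 0.
  by rewrite -big_split; apply: big1 => z _; exact: F_flip.
rewrite F_reindex -mulr2n => /eqP.
by rewrite mulrn_eq0 => /eqP.
Qed.

Lemma flip_noncomplier {dT} {T : measurableType dT} (Dt : T -> ctype L) w m z :
  A2 Dt -> ~ complier Dt m w -> Dt w (flip z m) = Dt w z.
Proof.
move=> mono Nc.
have Dt_flat : Dt w (setcoord z m false) = Dt w (setcoord z m true).
  have := mono w z m.
  case Ef: (Dt w _); case Et: (Dt w _) => //= _.
  by case: Nc; exists z; rewrite Ef Et.
have {2}-> : z = setcoord z m (z m).
  by apply/ffunP => j; rewrite ffunE; case: eqP => // ->.
by rewrite /flip; case: (z m).
Qed.

End flips.

Lemma posdef_diag_gt0 {R : numDomainType} {n} {M : 'M[R]_n} i : posdef M -> 0 < M i i.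
Proof.
move=> /(_ (delta_mx i 0)); rewrite trmx_delta -rowE -colE !mxE; apply.
by apply/eqP => /matrixP /(_ i 0); rewrite !mxE !eqxx; apply/eqP; exact: oner_neq0.
Qed.

Lemma invmx_diag {F : fieldType} {n} (e : 'rV[F]_n) : (forall i, e 0 i != 0) ->
  invmx (diag_mx e) = diag_mx (\row_i (e 0 i)^-1).
Proof.
move=> e_neq0.
have inv_r : diag_mx e *m diag_mx (\row_i (e 0 i)^-1) = 1%:M.
  rewrite mulmx_diag -diag_const_mx; congr diag_mx.
  by apply/rowP => i; rewrite !mxE mulfV.
have [e_unit _] := mulmx1_unit inv_r.
by rewrite -[invmx _]mulmx1 -inv_r mulmxA mulVmx // mul1mx.
Qed.

(* (Y - beta D)^2 on the units with D = b, as a function of (Y(0), Y(1)). *)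
Definition sq_residual {R : numDomainType} (beta : R) (b : bool) (y : R * R) : R :=
  (if b then y.2 - beta else y.1) ^+ 2.

Lemma sq_residual_ge0 (R : realDomainType) (beta : R) b y : 0 <= sq_residual beta b y.
Proof. exact: sqr_ge0. Qed.

Lemma sq_residual_le (R : realFieldType) (beta : R) b y :
  sq_residual beta b y <= 2 * (y.1 ^+ 2 + y.2 ^+ 2 + beta ^+ 2).
Proof.
have := sqr_ge0 y.1; have := sqr_ge0 y.2; have := sqr_ge0 beta.
by case: b; rewrite /sq_residual /=; [have := sqr_ge0 (y.2 + beta)|]; nra.
Qed.

Lemma measurable_sq_residual (R : realType) (beta : R) b :
  measurable_fun setT (sq_residual beta b).
Proof.
apply: measurable_funX; case: b.
- by apply: measurable_funB => //; exact: measurable_snd.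
- exact: measurable_fst.
Qed.

Section model.
Context {R : realType} {dT : measure_display} {T : measurableType dT}
  {P : probability T R} {L : nat} {Y0 Y1 : T -> R} {Dt : T -> ctype L}
  {Z : T -> ivec L}.

Lemma lambda_diag (e : 'rV[R]_L) l :
  lambda P Dt Z (diag_mx e) l =
  gamma P Dt Z l ^+ 2 * e 0 l / \sum_k gamma P Dt Z k ^+ 2 * e 0 k.
Proof.
rewrite /lambda -mulmxA mul_diag_mx !mxE.
under eq_bigr do rewrite !mxE.
by congr (_ / _); [ring | apply: eq_bigr => k _; ring].
Qed.

Hypothesis reg : regular P Y0 Y1 Dt Z.

Let DZ w := (Dt w, Z w).

Lemma DZ_fiber x : DZ @^-1` [set x] = [set w | Dt w = x.1] `&` [set w | Z w = x.2].
Proof. by case: x => d z; apply/seteqP; split => w /=; [case=> -> -> | case=> <- <-]. Qed.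

Lemma measurable_Dt_eq d : measurable [set w | Dt w = d].
Proof. by case: reg => _ [_ [? _]]. Qed.

Lemma measurable_Z_eq z : measurable [set w | Z w = z].
Proof. by case: reg => _ [_ [_ [? _]]]. Qed.

Lemma measurable_cell d z : measurable ([set w | Dt w = d] `&` [set w | Z w = z]).
Proof. by apply: measurableI; [exact: measurable_Dt_eq|exact: measurable_Z_eq]. Qed.

Lemma measurable_DZ_fiber x : measurable (DZ @^-1` [set x]).
Proof. by rewrite DZ_fiber; exact: measurable_cell. Qed.

Lemma Ex_DZ (phi : ctype L -> ivec L -> R) :
  Ex P (fun w => phi (Dt w) (Z w)) =
  \sum_x phi x.1 x.2 * Pr P ([set w | Dt w = x.1] `&` [set w | Z w = x.2]).
Proof.
rewrite (Ex_comp_finite P measurable_DZ_fiber (fun x => phi x.1 x.2)).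
by apply: eq_bigr => x _; rewrite DZ_fiber.
Qed.

Lemma measurable_Z_coord_eq l b : measurable [set w | Z w l = b].
Proof. exact: (measurable_preimage_finite measurable_Z_eq [set z | z l = b]). Qed.

Lemma Pr_Z_coord_false l : Pr P [set w | Z w l = false] = 1 - p P Z l.
Proof.
have -> : [set w | Z w l = false] = ~` [set w | Z w l = true].
  by apply/seteqP; split => w /=; case: (Z w l).
have mZl := measurable_Z_coord_eq l true.
by rewrite /Pr probability_setC // fineB // fin_num_measure.
Qed.

Lemma Ex_Z_coord (phi : bool -> R) l :
  Ex P (fun w => phi (Z w l)) = phi true * p P Z l + phi false * (1 - p P Z l).
Proof.
rewrite (Ex_comp_finite P (xi := fun w => Z w l) (measurable_Z_coord_eq l) phi).
by rewrite big_bool /= Pr_Z_coord_false.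
Qed.

Lemma SigmaZ_diag l : SigmaZ P Z l l = p P Z l * (1 - p P Z l).
Proof.
rewrite mxE (Ex_Z_coord (fun b => (b%:R - p P Z l) * (b%:R - p P Z l))) /=.
by ring.
Qed.

Lemma gammaE l : p P Z l != 0 -> 1 - p P Z l != 0 ->
  gamma P Dt Z l = pi_ P Dt Z l * p P Z l * (1 - p P Z l).
Proof.
move=> p_neq0 q_neq0.
set ED1 := Ex P (fun w => Dv Dt Z w * (Z w l == true)%:R).
set ED0 := Ex P (fun w => Dv Dt Z w * (Z w l == false)%:R).
have EDZ : Ex P (fun w => Dv Dt Z w * Zv Z l w) = ED1.
  by congr Ex; apply/funext => w; rewrite /Zv; case: (Z w l).
have ED_split : Ex P (Dv Dt Z) = ED1 + ED0.
  rewrite /ED1 /ED0 (Ex_DZ (fun d z => (d z)%:R)).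
  rewrite (Ex_DZ (fun d z => (d z)%:R * (z l == true)%:R)).
  rewrite (Ex_DZ (fun d z => (d z)%:R * (z l == false)%:R)) -big_split.
  by apply: eq_bigr => x _ /=; case: (x.2 l) => /=; ring.
have EZ : Ex P (Zv Z l) = p P Z l.
  by rewrite (Ex_Z_coord (fun b => b%:R)) /=; ring.
rewrite /gamma /pi_ /condE -/ED1 -/ED0 EDZ ED_split EZ Pr_Z_coord_false -/(p P Z l).
by field; rewrite p_neq0 q_neq0.
Qed.

Hypothesis indep : Indep P Y0 Y1 Dt Z.

Let U w := (Y0 w, Y1 w).
Let q j b := Pr P [set w | Z w j = b].

Lemma measurable_outcomes : measurable_fun setT U.
Proof. by case: reg => mY0 [mY1 _]; exact: measurable_fun_pair. Qed.

Lemma integral_cell_factor (g : R * R -> R) d z :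
  measurable_fun setT g -> (forall y, 0 <= g y) ->
  (\int[P]_(w in [set w | Dt w = d] `&` [set w | Z w = z]) (g (U w))%:E =
   (\prod_j q j (z j))%:E * \int[P]_(w in [set w | Dt w = d]) (g (U w))%:E)%E.
Proof.
move=> mg g0.
have mE := measurable_cell d z.
have q_ge0 : 0 <= \prod_j q j (z j) by apply: prodr_ge0 => j _; exact: fine_ge0.
have mgE : measurable_fun setT (fun y => (g y)%:E) by exact/measurable_EFinP.
have g0E : {in setT, forall y, (0 <= (g y)%:E)%E} by move=> y _; rewrite lee_fin.
have mgU : measurable_fun setT (fun w => (g (U w))%:E).
  exact: measurableT_comp mgE measurable_outcomes.
have push D (mD : measurable D) :=
  ge0_integral_pushforward measurable_outcomes (mrestr P mD) measurableT mgE g0E.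
have g0U w : (0 <= (g (U w))%:E)%E by rewrite lee_fin.
rewrite -(integral_mrestr P mE) // -(integral_mrestr P (measurable_Dt_eq d)) //.
rewrite -[in LHS](preimage_setT U) -[in RHS](preimage_setT U) -!push.
(* The image measure is built from a proof that U is measurable, which the
   rewrite asks for again. *)
rewrite -(ge0_integral_mscale _ measurableT (NngNum q_ge0) mgE);
  [exact: measurable_outcomes | move=> mU | by move=> y _; rewrite lee_fin].
apply: eq_measure_integral => A mA _.
have UA : U @^-1` A `&` [set w | Dt w = d] = [set w | (Y0 w, Y1 w) \in A /\ Dt w = d].
  by apply/seteqP; split => w /=; rewrite in_setE.
change (P (U @^-1` A `&` ([set w | Dt w = d] `&` [set w | Z w = z])) =
  (\prod_j q j (z j))%:E * P (U @^-1` A `&` [set w | Dt w = d]))%E.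
rewrite setIA UA indep // muleC; congr (_ * _)%E.
rewrite -prodEFin; apply: eq_bigr => j _.
by rewrite fineK // fin_num_measure //; exact: measurable_Z_coord_eq.
Qed.

Lemma measurable_Dv : measurable_fun setT (Dv Dt Z : T -> R).
Proof.
exact: (measurable_fun_comp_finite measurable_DZ_fiber (fun x => (x.1 x.2)%:R : R)).
Qed.

Lemma measurable_Zv j : measurable_fun setT (Zv Z j : T -> R).
Proof.
exact: (measurable_fun_comp_finite measurable_Z_eq (fun z => (z j)%:R : R)).
Qed.

Lemma measurable_Yv : measurable_fun setT (Yv Y0 Y1 Dt Z).
Proof.
have [mY0 [mY1 _]] := reg.
have -> : Yv Y0 Y1 Dt Z = Dv Dt Z \* Y1 \+ (cst 1 \- Dv Dt Z) \* Y0.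
  by apply/funext => w; rewrite /Yv /Dv /=; case: Dobs => /=; ring.
apply: measurable_funD; apply: measurable_funM => //; first exact: measurable_Dv.
by apply: measurable_funB => //; exact: measurable_Dv.
Qed.

Lemma integrable_sq_residual beta b D : measurable D ->
  P.-integrable D (fun w => (sq_residual beta b (U w))%:E).
Proof.
move=> mD; apply: (integrableS measurableT mD (@subsetT _ D)).
have [_ [_ [_ [_ [iY0 iY1]]]]] := reg.
have iB : P.-integrable setT (fun w => (2 * (Y0 w ^+ 2 + Y1 w ^+ 2 + beta ^+ 2))%:E).
  under eq_fun do rewrite EFinM !EFinD.
  apply: integrableZl => //; apply: integrableD => //; first exact: integrableD.
  exact: finite_measure_integrable_cst.
apply: (le_integrable measurableT _ _ iB) => [|w _].
  apply/measurable_EFinP; apply: measurableT_comp measurable_outcomes.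
  exact: measurable_sq_residual.
rewrite !abse_EFin lee_fin !ger0_norm ?sq_residual_le ?sq_residual_ge0 //.
by rewrite mulr_ge0 // !addr_ge0 // sqr_ge0.
Qed.

Let resid_moment beta d b :=
  fine (\int[P]_(w in [set w | Dt w = d]) (sq_residual beta b (U w))%:E).

Lemma Omega_cells beta l k :
  Omega P Y0 Y1 Dt Z beta l k =
  \sum_(d : ctype L) \sum_(z : ivec L) ((z l)%:R - p P Z l) * ((z k)%:R - p P Z k) *
                \prod_j q j (z j) * resid_moment beta d (d z).
Proof.
have mres : measurable_fun setT (fun w => Yv Y0 Y1 Dt Z w - beta * Dv Dt Z w).
  apply: measurable_funB; first exact: measurable_Yv.
  by apply: measurable_funM => //; exact: measurable_Dv.
rewrite mxE (Ex_fibers P measurable_DZ_fiber); last first.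
  by apply: measurable_funM; apply: measurable_funM => //;
    apply: measurable_funB => //; exact: measurable_Zv.
rewrite pair_bigA (eq_bigr (fun x : ctype L * ivec L =>
  (((x.2 l)%:R - p P Z l) * ((x.2 k)%:R - p P Z k) *
   \prod_j q j (x.2 j) * resid_moment beta x.1 (x.1 x.2))%:E)) ?sumEFin //.
move=> -[d z] _ /=; pose c := ((z l)%:R - p P Z l) * ((z k)%:R - p P Z k).
rewrite DZ_fiber /=.
rewrite (eq_integral (fun w => (c%:E * (sq_residual beta (d z) (U w))%:E)%E)); last first.
  move=> w /[!inE] -[/= Dw Zw].
  rewrite -EFinM /Yv /Dv /Zv /Dobs Dw Zw /c /U /sq_residual.
  by case: (d z) => /=; congr EFin; ring.
rewrite integralZl; first last.
- exact: integrable_sq_residual (measurable_cell d z).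
- exact: measurable_cell.
rewrite integral_cell_factor; [|exact: measurable_sq_residual|exact: sq_residual_ge0].
rewrite [RHS]EFinM /resid_moment fineK; first by rewrite muleA -EFinM.
apply: integrable_fin_num; first exact: measurable_Dt_eq.
exact: integrable_sq_residual (measurable_Dt_eq d).
Qed.

Lemma sum_cells_flip_invariant (beta : R) (d : ctype L) (m m' : 'I_L) : m' != m ->
  (forall z, d (flip z m) = d z) ->
  \sum_(z : ivec L) ((z m)%:R - p P Z m) * ((z m')%:R - p P Z m') *
                    \prod_j q j (z j) * resid_moment beta d (d z) = 0.
Proof.
move=> m'm d_flip; rewrite -[RHS](@sum_centered_flip_invariant _ _ m q (fun z =>
  ((z m')%:R - p P Z m') * resid_moment beta d (d z)) (Pr_Z_coord_false m)).
- by apply: eq_bigr => z _; rewrite /p /q; ring.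
- by move=> z; rewrite flip_neq // d_flip.
Qed.

Lemma Omega_offdiag beta l k : A2 Dt -> NoOverlap Dt -> l != k ->
  Omega P Y0 Y1 Dt Z beta l k = 0.
Proof.
move=> mono disj lk; rewrite Omega_cells; apply: big1 => d _.
have [[w Dw]|no_unit] := pselect (exists w, Dt w = d); last first.
  have no_d : [set w | Dt w = d] = set0.
    by apply/seteqP; split => // w Dw; apply: no_unit; exists w.
  by apply: big1 => z _; rewrite /resid_moment no_d integral_set0 mulr0.
have [cl|ncl] := pselect (complier Dt l w).
- have nck : ~ complier Dt k w by move=> ck; exact: (disj l k lk w).
  under eq_bigr do rewrite [X in X * _ * _]mulrC.
  by apply: sum_cells_flip_invariant lk _ => z; rewrite -Dw flip_noncomplier.
- apply: sum_cells_flip_invariant; first by rewrite eq_sym.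
  by move=> z; rewrite -Dw flip_noncomplier.
Qed.

End model.

Theorem corollary2 (R : realType) (dT : measure_display) (T : measurableType dT)
  (P : probability T R) (L : nat) (Y0 Y1 : T -> R) (Dt : T -> ctype L)
  (Z : T -> ivec L) (betaE : R) :
  (2 <= L)%N ->
  regular P Y0 Y1 Dt Z ->
  A1 P Y0 Y1 Dt Z ->
  A2 Dt ->
  A3 P Dt Z ->
  Indep P Y0 Y1 Dt Z ->
  NoOverlap Dt ->
  (forall beta, posdef (Omega P Y0 Y1 Dt Z beta)) ->
  is_EGMM P Y0 Y1 Dt Z betaE ->
  let Om := Omega P Y0 Y1 Dt Z betaE in
  let sig2 := fun l : 'I_L => Om l l / (p P Z l * (1 - p P Z l)) in
  let num := fun l : 'I_L =>
    pi_ P Dt Z l ^+ 2 * p P Z l * (1 - p P Z l) / sig2 l in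
  (forall l k : 'I_L, l != k -> Om l k = 0) /\
  (forall l : 'I_L,
     lambda P Dt Z (invmx Om) l = num l / \sum_(k < L) num k).
Proof.
move=> _ reg _ mono [p_gt0 [_ SigmaZ_pd]] indep disj Omega_pd _ Om sig2 num.
have offdiag l k : l != k -> Om l k = 0 := Omega_offdiag reg indep betaE l k mono disj.
split=> // l.
have Om_gt0 i : 0 < Om i i := posdef_diag_gt0 i (Omega_pd betaE).
have Om_diag : Om = diag_mx (\row_i Om i i).
  apply/matrixP => i j; rewrite [RHS]mxE [in RHS]mxE.
  by case: (eqVneq i j) => [->|/offdiag->]; rewrite ?mulr1n ?mulr0n.
have numE i : num i = gamma P Dt Z i ^+ 2 * (Om i i)^-1.
  have pq_gt0 := posdef_diag_gt0 i SigmaZ_pd; rewrite (SigmaZ_diag reg) in pq_gt0.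
  have p_neq0 : p P Z i != 0 by rewrite gt_eqF.
  have q_neq0 : 1 - p P Z i != 0 by apply: contraTneq pq_gt0 => ->; rewrite mulr0 ltxx.
  by rewrite /num /sig2 (gammaE reg) //; field; rewrite p_neq0 q_neq0 gt_eqF.
rewrite Om_diag invmx_diag => [|i]; last by rewrite mxE gt_eqF.
clearbody num sig2 Om.
rewrite lambda_diag !mxE numE; congr (_ / _).
by apply: eq_bigr => i _; rewrite !mxE numE.
Qed.
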